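(* For a finite graph $G=(V,E)$, the function $$S^B(\mathbf{x})=\frac12\sum_{v\in V}\Big\{\sum_{e\in\partial v}\big(-x_e\ln x_e+(1-x_e)\ln(1-x_e)\big)-2\Big(1-\sum_{e\in\partial v}x_e\Big)\ln\Big(1-\sum_{e\in\partial v}x_e\Big)\Big\}$$ (with $0\ln0=0$) is non-negative and concave on $FM(G)$.
   Context: $\partial v$ denotes the set of edges incident to $v$. $FM(G)=\{\mathbf{x}\in\mathbb{R}^E:x_e\ge0,\ \sum_{e\in\partial v}x_e\le1\ \forall v\in V\}$. *)

From Stdlib Require Import Reals List Arith.
Open Scope R_scope.

(* A finite simple graph on vertex set V = {0,...,n-1}: a duplicate-free list
   of edges (a,b) with a < b < n.  Edges are indexed by their position
   i < length E in the list; a vector x in R^E is a function nat -> R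
   (only the values at i < length E matter). *)
Definition simple_graph (n : nat) (E : list (nat * nat)) : Prop :=
  NoDup E /\ (forall a b, In (a, b) E -> (a < b)%nat /\ (b < n)%nat).

Fixpoint rsum (m : nat) (f : nat -> R) : R :=
  match m with O => 0 | S k => rsum k f + f k end.

Definition incident (E : list (nat * nat)) (v i : nat) : bool :=
  let (a, b) := nth i E (0%nat, 0%nat) in orb (Nat.eqb a v) (Nat.eqb b v).

Definition sum_at (E : list (nat * nat)) (v : nat) (f : nat -> R) : R :=
  rsum (length E) (fun i => if incident E v i then f i else 0).

Definition xlnx (t : R) : R := if Rle_dec t 0 then 0 else t * ln t.

Definition FM (n : nat) (E : list (nat * nat)) (x : nat -> R) : Prop :=
  (forall i, (i < length E)%nat -> 0 <= x i) /\
  (forall v, (v < n)%nat -> sum_at E v x <= 1).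

Definition SB (n : nat) (E : list (nat * nat)) (x : nat -> R) : R :=
  / 2 * rsum n (fun v =>
      sum_at E v (fun i => - xlnx (x i) + xlnx (1 - x i))
      - 2 * xlnx (1 - sum_at E v x)).

(* [S^B(x) = 1/2 Σ_v Ψ(x|∂v)], where [x|∂v] are the edge values at [v] and
   [Ψ(z) = Σ_i (- z_i ln z_i + (1 - z_i) ln (1 - z_i))
           - 2 (1 - Σ z_i) ln (1 - Σ z_i)]
   is a function on the simplex [{z >= 0, Σ z_i <= 1}].  Everything reduces
   to two facts about this vertex entropy Ψ:
   - concavity: along a segment, the second derivative of Ψ is
     [Σ_i d_i^2 (1/(1-p_i) - 1/p_i)] over the edge coordinates and the slack
     coordinate [p_0 = 1 - Σ p_i] (with [Σ d_i = 0]), minus nonnegative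
     terms; this "Hessian inequality" is proved with a weighted
     Cauchy–Schwarz inequality and the superadditivity of
     [kappa p = p (1-p) / (1-2p)], and concavity then follows from a
     mean-value argument on [[0, 1]];
   - nonnegativity: Ψ vanishes at the vertices of the simplex, so concavity
     and induction on the dimension give [Ψ >= 0]. *)

From Stdlib Require Import Reals List Arith Lra Lia Psatz.
From Stdlib Require Import Classical FunctionalExtensionality.
From Coquelicot Require Import Coquelicot.
Open Scope R_scope.

Lemma rsum_ext m f g : (forall i, (i < m)%nat -> f i = g i) -> rsum m f = rsum m g.
Proof.
  induction m as [|m IH]; intros H; simpl; [reflexivity|].
  rewrite IH by (intros; apply H; lia). rewrite H by lia. reflexivity.
Qed.

Lemma rsum_plus m f g : rsum m (fun i => f i + g i) = rsum m f + rsum m g.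
Proof. induction m as [|m IH]; simpl; [lra|]. rewrite IH; ring. Qed.

Lemma rsum_scal m c f : rsum m (fun i => c * f i) = c * rsum m f.
Proof. induction m as [|m IH]; simpl; [ring|]. rewrite IH; ring. Qed.

Lemma rsum_minus m f g : rsum m (fun i => f i - g i) = rsum m f - rsum m g.
Proof. induction m as [|m IH]; simpl; [ring|]. rewrite IH; ring. Qed.

Lemma rsum_zero m : rsum m (fun _ => 0) = 0.
Proof. induction m as [|m IH]; simpl; [reflexivity|]. rewrite IH; ring. Qed.

Lemma rsum_le m f g : (forall i, (i < m)%nat -> f i <= g i) -> rsum m f <= rsum m g.
Proof.
  induction m as [|m IH]; intros H; simpl; [lra|].
  apply Rplus_le_compat; [apply IH; intros; apply H|apply H]; lia.
Qed.

Lemma rsum_nonneg m f : (forall i, (i < m)%nat -> 0 <= f i) -> 0 <= rsum m f.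
Proof. intros H. rewrite <- (rsum_zero m). now apply rsum_le. Qed.

Lemma rsum_split m f i0 : (i0 < m)%nat ->
  rsum m f = f i0 + rsum m (fun i => if Nat.eqb i i0 then 0 else f i).
Proof.
  induction m as [|m IH]; intros Hi; simpl; [lia|].
  destruct (Nat.eqb_spec m i0) as [->|Hne].
  - rewrite (rsum_ext i0 (fun i => if Nat.eqb i i0 then 0 else f i) f); [ring|].
    intros i Hi'. destruct (Nat.eqb_spec i i0); [lia|reflexivity].
  - rewrite IH by lia. ring.
Qed.

Lemma rsum_ge_term m f i0 : (forall i, (i < m)%nat -> 0 <= f i) -> (i0 < m)%nat ->
  f i0 <= rsum m f.
Proof.
  intros H Hi. rewrite (rsum_split m f i0 Hi).
  enough (0 <= rsum m (fun i => if Nat.eqb i i0 then 0 else f i)) by lra.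
  apply rsum_nonneg. intros i Hi'. destruct (Nat.eqb i i0); [lra|auto].
Qed.

Lemma rsum_snoc m f c :
  rsum (S m) (fun i => if Nat.ltb i m then f i else c) = rsum m f + c.
Proof.
  simpl. rewrite Nat.ltb_irrefl. f_equal. apply rsum_ext.
  intros i Hi. now replace (Nat.ltb i m) with true by (symmetry; apply Nat.ltb_lt; lia).
Qed.

Lemma engel_step A S W a w : 0 <= S -> 0 <= W -> A * A <= S * W -> 0 < w ->
  (A + a) * (A + a) <= (S + a * a / w) * (W + w).
Proof.
  intros HS HW HA Hw.
  set (c := a / w). replace a with (c * w) by (unfold c; field; lra).
  replace (c * w * (c * w) / w) with (c * c * w) by (field; lra).
  assert (Hq : 0 <= S + c * c * W - 2 * A * c).
  { destruct (Req_dec W 0) as [->|HW0]; [nra|].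
    assert (0 <= W * (S + c * c * W - 2 * A * c))
      by (pose proof (Rle_0_sqr (A - c * W)); unfold Rsqr in *; nra).
    apply (Rmult_le_reg_l W); lra. }
  nra.
Qed.

Lemma sq_div_nonneg a w : 0 <= w -> 0 <= a * a / w.
Proof.
  intros Hw. destruct (Req_dec w 0) as [->|Hw0].
  - unfold Rdiv. rewrite Rinv_0. lra.
  - apply Rmult_le_pos; [nra|]. apply Rlt_le, Rinv_0_lt_compat. lra.
Qed.

Lemma cauchy_schwarz_engel m a w :
  (forall i, (i < m)%nat -> 0 <= w i) ->
  (forall i, (i < m)%nat -> a i <> 0 -> 0 < w i) ->
  rsum m a * rsum m a <= rsum m (fun i => a i * a i / w i) * rsum m w.
Proof.
  induction m as [|m IH]; intros Hw Hpos; simpl; [lra|].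
  assert (IH' : rsum m a * rsum m a <= rsum m (fun i => a i * a i / w i) * rsum m w)
    by (apply IH; intros; [apply Hw|apply Hpos]; auto; lia).
  assert (HS : 0 <= rsum m (fun i => a i * a i / w i))
    by (apply rsum_nonneg; intros; apply sq_div_nonneg, Hw; lia).
  assert (HW : 0 <= rsum m w) by (apply rsum_nonneg; intros; apply Hw; lia).
  destruct (Req_dec (a m) 0) as [Ha|Ha].
  - rewrite Ha. unfold Rdiv. rewrite !Rmult_0_l, !Rplus_0_r.
    assert (0 <= w m) by (apply Hw; lia). nra.
  - apply engel_step; try assumption. apply Hpos; [lia|assumption].
Qed.

(** ** The weight [kappa p = p (1 - p) / (1 - 2p)]
    It is the reciprocal of [1/p - 1/(1-p)]; on [[0, 1/2)] it is nonnegative,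
    superadditive and hence monotone. *)

Definition kappa (p : R) : R := p * (1 - p) / (1 - 2 * p).

Lemma kappa_pos p : 0 < p < /2 -> 0 < kappa p.
Proof.
  intros Hp. unfold kappa. apply Rmult_lt_0_compat; [nra|].
  apply Rinv_0_lt_compat. lra.
Qed.

Lemma kappa_nonneg p : 0 <= p < /2 -> 0 <= kappa p.
Proof.
  intros Hp. unfold kappa. apply Rmult_le_pos; [nra|].
  apply Rlt_le, Rinv_0_lt_compat. lra.
Qed.

Lemma kappa_superadditive a b : 0 <= a -> 0 <= b -> a + b < /2 ->
  kappa a + kappa b <= kappa (a + b).
Proof.
  intros Ha Hb Hab.
  assert (E : kappa (a + b) - kappa a - kappa b
              = 2 * a * b * (1 - a - b) / ((1 - 2 * a) * (1 - 2 * b) * (1 - 2 * (a + b))))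
    by (unfold kappa; field; repeat split; lra).
  enough (0 <= 2 * a * b * (1 - a - b) / ((1 - 2 * a) * (1 - 2 * b) * (1 - 2 * (a + b))))
    by lra.
  apply Rmult_le_pos; [apply Rmult_le_pos; nra|].
  apply Rlt_le, Rinv_0_lt_compat. repeat apply Rmult_lt_0_compat; lra.
Qed.

Lemma kappa_monotone a b : 0 <= a -> a <= b -> b < /2 -> kappa a <= kappa b.
Proof.
  intros Ha Hab Hb. replace b with (a + (b - a)) by ring.
  pose proof (kappa_superadditive a (b - a)).
  pose proof (kappa_nonneg (b - a)). lra.
Qed.

Lemma kappa_rsum m p : (forall i, (i < m)%nat -> 0 <= p i) -> rsum m p < /2 ->
  rsum m (fun i => kappa (p i)) <= kappa (rsum m p).
Proof.
  induction m as [|m IH]; intros Hp Hs; simpl in *.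
  - unfold kappa. lra.
  - assert (0 <= rsum m p) by (apply rsum_nonneg; intros; apply Hp; lia).
    assert (0 <= p m) by (apply Hp; lia).
    assert (rsum m (fun i => kappa (p i)) <= kappa (rsum m p))
      by (apply IH; [intros; apply Hp; lia|lra]).
    pose proof (kappa_superadditive (rsum m p) (p m)). lra.
Qed.

Lemma hessian_term_kappa d p : 0 < p < 1 -> p <> /2 ->
  d * d / (1 - p) - d * d / p = - (d * d / kappa p).
Proof. intros Hp Hh. unfold kappa. field. repeat split; lra. Qed.

Lemma kappa_cauchy_schwarz m p d K :
  (forall i, (i < m)%nat -> 0 <= p i) -> rsum m p < /2 ->
  (forall i, (i < m)%nat -> d i <> 0 -> 0 < p i) ->
  kappa (rsum m p) <= K -> 0 < K ->
  rsum m d * rsum m d / K <= rsum m (fun i => d i * d i / kappa (p i)).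
Proof.
  intros Hp Hsum Hact HK HKpos.
  assert (Hsmall : forall i, (i < m)%nat -> p i < /2)
    by (intros i Hi; pose proof (rsum_ge_term m p i Hp Hi); lra).
  set (w := fun i => kappa (p i)).
  assert (Hw : forall i, (i < m)%nat -> 0 <= w i)
    by (intros i Hi; apply kappa_nonneg; split; auto).
  assert (Hwpos : forall i, (i < m)%nat -> d i <> 0 -> 0 < w i)
    by (intros i Hi Hdi; apply kappa_pos; split; auto).
  pose proof (cauchy_schwarz_engel m d w Hw Hwpos) as CS.
  set (Sd := rsum m (fun i => d i * d i / w i)) in *.
  assert (HSd : 0 <= Sd) by (apply rsum_nonneg; intros; apply sq_div_nonneg; auto).
  assert (HW : rsum m w <= K)
    by (apply Rle_trans with (kappa (rsum m p)); [apply kappa_rsum|]; auto).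
  assert (Sd * rsum m w <= Sd * K) by (apply Rmult_le_compat_l; auto).
  change (rsum m (fun i => d i * d i / kappa (p i))) with Sd.
  apply (Rmult_le_reg_r K); [exact HKpos|].
  unfold Rdiv. rewrite Rmult_assoc, Rinv_l by lra. lra.
Qed.

(** Terms with
    [p_i <= 1/2] are nonpositive; at most one [p_i] exceeds [1/2], and its
    positive term [d_i0^2 / kappa (1 - p_i0)] is absorbed by the others
    through [kappa_cauchy_schwarz], since [Σ_{i <> i0} d_i = - d_i0] and
    [Σ_{i <> i0} p_i <= 1 - p_i0]. *)

Lemma hessian_ineq_dominant m p d i0 :
  (forall i, (i < m)%nat -> 0 <= p i) -> rsum m p <= 1 ->
  (forall i, (i < m)%nat -> d i <> 0 -> 0 < p i < 1) -> rsum m d = 0 ->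
  (i0 < m)%nat -> /2 < p i0 < 1 ->
  rsum m (fun i => d i * d i / (1 - p i) - d i * d i / p i) <= 0.
Proof.
  intros Hp Hsum Hact Hd Hi0 Hbig.
  set (F := fun i => d i * d i / (1 - p i) - d i * d i / p i).
  set (p' := fun i => if Nat.eqb i i0 then 0 else p i).
  set (d' := fun i => if Nat.eqb i i0 then 0 else d i).
  assert (Hp' : forall i, (i < m)%nat -> 0 <= p' i)
    by (intros i Hi; unfold p'; destruct (Nat.eqb i i0); [lra|auto]).
  assert (Hsplit_p : rsum m p = p i0 + rsum m p') by (apply rsum_split; exact Hi0).
  assert (Hsplit_d : rsum m d = d i0 + rsum m d') by (apply rsum_split; exact Hi0).
  assert (Hsmall : forall i, (i < m)%nat -> p' i < /2)
    by (intros i Hi; pose proof (rsum_ge_term m p' i Hp' Hi); lra).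
  assert (Hact' : forall i, (i < m)%nat -> d' i <> 0 -> 0 < p' i).
  { intros i Hi Hdi. unfold d', p' in *. destruct (Nat.eqb i i0); [lra|].
    now apply Hact. }
  assert (HCS : rsum m d' * rsum m d' / kappa (1 - p i0)
                <= rsum m (fun i => d' i * d' i / kappa (p' i))).
  { apply kappa_cauchy_schwarz; auto; [lra| |apply kappa_pos; lra].
    apply kappa_monotone; [apply rsum_nonneg; auto|lra|lra]. }
  assert (HF0 : F i0 = d i0 * d i0 / kappa (1 - p i0))
    by (unfold F, kappa; field; repeat split; lra).
  assert (HFrest : rsum m (fun i => if Nat.eqb i i0 then 0 else F i)
                   = -1 * rsum m (fun i => d' i * d' i / kappa (p' i))).
  { rewrite <- rsum_scal. apply rsum_ext. intros i Hi.
    pose proof (Hsmall i Hi) as Hs. unfold F, d', p' in Hs |- *.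
    destruct (Nat.eqb_spec i i0); [unfold Rdiv; ring|].
    destruct (Req_dec (d i) 0) as [->|Hdi]; [unfold Rdiv; ring|].
    rewrite hessian_term_kappa by (pose proof (Hact i Hi Hdi); lra). ring. }
  change (rsum m F <= 0). rewrite (rsum_split m F i0 Hi0), HFrest, HF0.
  replace (rsum m d') with (- d i0) in HCS by lra.
  replace (- d i0 * - d i0) with (d i0 * d i0) in HCS by ring.
  lra.
Qed.

Lemma hessian_ineq m p d :
  (forall i, (i < m)%nat -> 0 <= p i) -> rsum m p <= 1 ->
  (forall i, (i < m)%nat -> d i <> 0 -> 0 < p i < 1) -> rsum m d = 0 ->
  rsum m (fun i => d i * d i / (1 - p i) - d i * d i / p i) <= 0.
Proof.
  intros Hp Hsum Hact Hd.
  destruct (classic (exists i0, (i0 < m)%nat /\ d i0 <> 0 /\ /2 < p i0))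
    as [[i0 [Hi0 [Hdi0 Hbig]]]|Hnone].
  - apply (hessian_ineq_dominant m p d i0); auto.
    pose proof (Hact i0 Hi0 Hdi0). lra.
  - rewrite <- (rsum_zero m). apply rsum_le. intros i Hi.
    destruct (Req_dec (d i) 0) as [->|Hdi]; [unfold Rdiv; lra|].
    assert (p i <= /2) by (apply Rnot_lt_le; intros Hb; apply Hnone; eauto).
    pose proof (Hact i Hi Hdi).
    enough (d i * d i / (1 - p i) <= d i * d i / p i) by lra.
    apply Rmult_le_compat_l; [nra|]. apply Rinv_le_contravar; lra.
Qed.

(* The form used for the vertex entropy: [m] edge coordinates plus the slack
   coordinate [p0 = 1 - Σ p_i]. *)
Lemma hessian_ineq_slack m p d p0 d0 :
  (forall i, (i < m)%nat -> 0 <= p i) -> 0 <= p0 -> rsum m p + p0 = 1 ->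
  (forall i, (i < m)%nat -> d i <> 0 -> 0 < p i < 1) -> (d0 <> 0 -> 0 < p0 < 1) ->
  rsum m d + d0 = 0 ->
  rsum m (fun i => d i * d i / (1 - p i) - d i * d i / p i)
    + (d0 * d0 / (1 - p0) - d0 * d0 / p0) <= 0.
Proof.
  intros Hp Hp0 Hsum Hact Hact0 Hd.
  set (ext := fun (f : nat -> R) c i => if Nat.ltb i m then f i else c).
  pose proof (hessian_ineq (S m) (ext p p0) (ext d d0)) as H.
  rewrite <- (rsum_snoc m (fun i => d i * d i / (1 - p i) - d i * d i / p i)).
  rewrite (rsum_ext (S m) _ (fun i => ext d d0 i * ext d d0 i / (1 - ext p p0 i)
                                       - ext d d0 i * ext d d0 i / ext p p0 i))
    by (intros i _; unfold ext; destruct (Nat.ltb i m); reflexivity).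
  apply H; unfold ext; try (rewrite rsum_snoc; lra);
    intros i Hi; destruct (Nat.ltb_spec i m); auto.
Qed.

Lemma xlnx_0 : xlnx 0 = 0.
Proof. unfold xlnx. destruct (Rle_dec 0 0); lra. Qed.

Lemma xlnx_1 : xlnx 1 = 0.
Proof. unfold xlnx. destruct (Rle_dec 1 0); [lra|]. rewrite ln_1. ring. Qed.

Lemma xlnx_sqrt_bound x : 0 < x < 1 -> x * ln x <= 0 /\ - (x * ln x) <= 2 * sqrt x.
Proof.
  intros Hx.
  assert (ln x < 0) by (rewrite <- ln_1; apply ln_increasing; lra).
  split; [nra|].
  set (s := sqrt x). assert (Hs : 0 < s) by (apply sqrt_lt_R0; lra).
  assert (Hxs : x = s * s) by (unfold s; rewrite sqrt_sqrt; lra).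
  assert (Hln : ln x = 2 * ln s) by (rewrite Hxs, ln_mult by lra; ring).
  (* [exp u >= 1 + u] at [u = - ln s] gives [- ln s <= 1/s - 1]. *)
  pose proof (exp_ineq1_le (- ln s)) as He. rewrite exp_Ropp, exp_ln in He by lra.
  rewrite Hln, Hxs.
  assert (s * s * (- ln s) <= s * s * (/ s - 1)) by (apply Rmult_le_compat_l; nra).
  assert (s * s * (/ s - 1) = s - s * s) by (field; lra).
  nra.
Qed.

Lemma xlnx_continuous x : continuity_pt xlnx x.
Proof.
  destruct (Rtotal_order x 0) as [Hx|[->|Hx]].
  - apply continuity_pt_filterlim, (continuous_ext_loc _ (fun _ => 0)).
    + apply (filter_imp (fun u => u < 0)); [|now apply open_lt].
      intros y Hy. unfold xlnx. destruct (Rle_dec y 0); [reflexivity|lra].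
    + unfold xlnx. destruct (Rle_dec x 0); [apply continuous_const|lra].
  - intros eps Heps. exists (Rmin 1 ((eps / 2) * (eps / 2))).
    split; [apply Rmin_pos; nra|]. intros y [_ Hy]. simpl in *. unfold R_dist in *.
    rewrite Rminus_0_r in Hy. rewrite xlnx_0, Rminus_0_r.
    unfold xlnx. destruct (Rle_dec y 0); [rewrite Rabs_R0; lra|].
    pose proof (Rlt_le_trans _ _ _ Hy (Rmin_l _ _)) as Hy1.
    pose proof (Rlt_le_trans _ _ _ Hy (Rmin_r _ _)) as Hy2.
    rewrite Rabs_right in Hy1, Hy2 by lra.
    destruct (xlnx_sqrt_bound y) as [B1 B2]; [lra|].
    rewrite Rabs_left1 by lra.
    assert (sqrt y < eps / 2)
      by (rewrite <- (sqrt_square (eps / 2)) by lra; apply sqrt_lt_1; lra).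
    lra.
  - apply continuity_pt_filterlim, (continuous_ext_loc _ (fun y => y * ln y)).
    + apply (filter_imp (fun u => 0 < u)); [|now apply open_gt].
      intros y Hy. unfold xlnx. destruct (Rle_dec y 0); [lra|reflexivity].
    + apply (continuous_mult (fun y => y) ln); [apply continuous_id|now apply continuous_ln].
Qed.

Lemma xlnx_derive u : 0 < u -> is_derive xlnx u (ln u + 1).
Proof.
  intros Hu. apply (is_derive_ext_loc (fun y => y * ln y)).
  - apply (filter_imp (fun v => 0 < v)); [|now apply open_gt].
    intros y Hy. unfold xlnx. destruct (Rle_dec y 0); [lra|reflexivity].
  - auto_derive; [lra|]. field. lra.
Qed.

Lemma affine_nonneg a c t : 0 <= a -> 0 <= a + c -> 0 <= t <= 1 -> 0 <= a + t * c.
Proof.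
  intros Ha Hac Ht. replace (a + t * c) with ((1 - t) * a + t * (a + c)) by ring.
  apply Rplus_le_le_0_compat; apply Rmult_le_pos; lra.
Qed.

Lemma affine_pos a c t : 0 <= a -> 0 <= a + c -> c <> 0 -> 0 < t < 1 -> 0 < a + t * c.
Proof.
  intros Ha Hac Hc Ht. destruct (Req_dec a 0) as [->|Ha0]; [|nra].
  assert (0 < c) by lra. nra.
Qed.

Lemma affine_interior a c t : 0 <= a <= 1 -> 0 <= a + c <= 1 -> c <> 0 -> 0 < t < 1 ->
  0 < a + t * c < 1.
Proof.
  intros Ha Hac Hc Ht. split; [apply affine_pos; lra|].
  enough (0 < (1 - a) + t * - c) by lra.
  apply affine_pos; [lra|lra|intros E; apply Hc; lra|lra].
Qed.

Definition smooth01 (f f' f'' : R -> R) : Prop :=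
  (forall s, 0 <= s <= 1 -> continuity_pt f s) /\
  (forall s, 0 < s < 1 -> is_derive f s (f' s)) /\
  (forall s, 0 < s < 1 -> is_derive f' s (f'' s)).

Lemma smooth01_const c : smooth01 (fun _ => c) (fun _ => 0) (fun _ => 0).
Proof.
  split; [|split]; intros.
  - apply continuity_pt_const. intros u v. reflexivity.
  - apply (is_derive_const (K := R_AbsRing) (V := R_NormedModule)).
  - apply (is_derive_const (K := R_AbsRing) (V := R_NormedModule)).
Qed.

Lemma smooth01_plus f f' f'' g g' g'' :
  smooth01 f f' f'' -> smooth01 g g' g'' ->
  smooth01 (fun s => f s + g s) (fun s => f' s + g' s) (fun s => f'' s + g'' s).
Proof.
  intros [Cf [Df D2f]] [Cg [Dg D2g]]. split; [|split]; intros s Hs.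
  - apply continuity_pt_plus; auto.
  - apply (is_derive_plus f g); auto.
  - apply (is_derive_plus f' g'); auto.
Qed.

Lemma smooth01_scal k f f' f'' : smooth01 f f' f'' ->
  smooth01 (fun s => k * f s) (fun s => k * f' s) (fun s => k * f'' s).
Proof.
  intros [Cf [Df D2f]]. split; [|split]; intros s Hs.
  - apply continuity_pt_mult; [apply continuity_pt_const; intros u v; reflexivity|auto].
  - apply (is_derive_scal f s k); auto.
  - apply (is_derive_scal f' s k); auto.
Qed.

Lemma smooth01_rsum m (f f' f'' : nat -> R -> R) :
  (forall i, (i < m)%nat -> smooth01 (f i) (f' i) (f'' i)) ->
  smooth01 (fun s => rsum m (fun i => f i s)) (fun s => rsum m (fun i => f' i s))
           (fun s => rsum m (fun i => f'' i s)).
Proof.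
  induction m as [|m IH]; intros H; simpl.
  - apply smooth01_const.
  - apply smooth01_plus; [apply IH; intros; apply H; lia|apply H; lia].
Qed.

Lemma smooth01_xlnx_affine a c : 0 <= a -> 0 <= a + c ->
  smooth01 (fun s => xlnx (a + s * c)) (fun s => c * (ln (a + s * c) + 1))
           (fun s => c * c / (a + s * c)).
Proof.
  intros Ha Hac.
  destruct (Req_dec c 0) as [->|Hc].
  - replace (fun s => xlnx (a + s * 0)) with (fun _ : R => xlnx a)
      by (apply functional_extensionality; intros s; f_equal; ring).
    replace (fun s => 0 * (ln (a + s * 0) + 1)) with (fun _ : R => 0)
      by (apply functional_extensionality; intros s; ring).
    replace (fun s => 0 * 0 / (a + s * 0)) with (fun _ : R => 0)
      by (apply functional_extensionality; intros s; unfold Rdiv; ring).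
    apply smooth01_const.
  - split; [|split]; intros s Hs.
    + apply continuity_pt_filterlim.
      apply (continuous_comp (fun t => a + t * c) xlnx).
      * apply (continuous_plus (fun _ => a) (fun t => t * c));
          [apply continuous_const|apply (continuous_mult (fun t => t) (fun _ => c));
           [apply continuous_id|apply continuous_const]].
      * apply continuity_pt_filterlim, xlnx_continuous.
    + pose proof (affine_pos a c s Ha Hac Hc Hs) as Hpos.
      apply (is_derive_comp xlnx (fun t => a + t * c) s (ln (a + s * c) + 1) c).
      * exact (xlnx_derive _ Hpos).
      * auto_derive; [exact I|ring].
    + pose proof (affine_pos a c s Ha Hac Hc Hs).
      auto_derive; [lra|]. field. lra.
Qed.

Lemma MVT_open (f df : R -> R) a b : a < b ->
  (forall c, a < c < b -> is_derive f c (df c)) ->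
  (forall c, a <= c <= b -> continuity_pt f c) ->
  exists c, a < c < b /\ f b - f a = df c * (b - a).
Proof.
  intros Hab Hd Hc.
  set (pr1 := fun c (P : a < c < b) =>
    exist (fun l => derivable_pt_lim f c l) (df c) (proj1 (is_derive_Reals _ _ _) (Hd c P))).
  set (pr2 := fun c (_ : a < c < b) => derivable_pt_id c).
  destruct (MVT f id a b pr1 pr2 Hab Hc
              (fun c _ => derivable_continuous_pt _ _ (derivable_pt_id c))) as [c [P Hm]].
  exists c. split; [exact P|]. unfold pr1, pr2 in Hm. simpl in Hm.
  rewrite derive_pt_id in Hm. unfold id in Hm. lra.
Qed.

Lemma concave_of_smooth01 G G' G'' : smooth01 G G' G'' ->
  (forall s, 0 < s < 1 -> G'' s <= 0) ->
  forall t, 0 <= t <= 1 -> t * G 1 + (1 - t) * G 0 <= G t.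
Proof.
  intros [HC [HD HD2]] Hneg t Ht.
  assert (Hmono : forall s u, 0 < s -> s < u -> u < 1 -> G' u <= G' s).
  { intros s u Hs Hsu Hu.
    destruct (MVT_open G' G'' s u Hsu) as [c [Hc Hm]].
    - intros c Hc. apply HD2. lra.
    - intros c Hc. apply continuity_pt_filterlim.
      apply (ex_derive_continuous (K := R_AbsRing) (V := R_NormedModule) G' c).
      eexists. apply HD2. lra.
    - assert (G'' c <= 0) by (apply Hneg; lra). nra. }
  destruct (Req_dec t 0) as [->|Ht0]; [lra|].
  destruct (Req_dec t 1) as [->|Ht1]; [lra|].
  destruct (MVT_open G G' 0 t) as [c1 [Hc1 E1]];
    [lra|intros; apply HD; lra|intros; apply HC; lra|].
  destruct (MVT_open G G' t 1) as [c2 [Hc2 E2]];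
    [lra|intros; apply HD; lra|intros; apply HC; lra|].
  assert (G' c2 <= G' c1) by (apply Hmono; lra).
  assert (t * G 1 + (1 - t) * G 0 - G t = t * (1 - t) * (G' c2 - G' c1)) by nra.
  assert (0 <= t * (1 - t)) by nra.
  nra.
Qed.

Definition vertex_entropy (m : nat) (z : nat -> R) : R :=
  rsum m (fun i => - xlnx (z i) + xlnx (1 - z i)) - 2 * xlnx (1 - rsum m z).

Definition simplex (m : nat) (z : nat -> R) : Prop :=
  (forall i, (i < m)%nat -> 0 <= z i) /\ rsum m z <= 1.

Lemma vertex_entropy_ext m z z' : (forall i, (i < m)%nat -> z i = z' i) ->
  vertex_entropy m z = vertex_entropy m z'.
Proof.
  intros H. unfold vertex_entropy. rewrite (rsum_ext m z z' H).
  f_equal. apply rsum_ext. intros i Hi. now rewrite H.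
Qed.

Lemma simplex_coord m z i : simplex m z -> (i < m)%nat -> 0 <= z i <= 1.
Proof.
  intros [Hz Hs] Hi. pose proof (rsum_ge_term m z i Hz Hi). split; [auto|lra].
Qed.

Section Segment.

Variables (m : nat) (x y : nat -> R).
Hypotheses (Hx : simplex m x) (Hy : simplex m y).

Let q i := x i - y i.
Let Q := rsum m q.
Let r0 := 1 - rsum m y.

(* Ψ on the segment, written as a combination of [xlnx] of affine functions,
   together with its first two derivatives. *)
Let G s := rsum m (fun i => -1 * xlnx (y i + s * q i) + xlnx ((1 - y i) + s * - q i))
           + -2 * xlnx (r0 + s * - Q).
Let G' s := rsum m (fun i => -1 * (q i * (ln (y i + s * q i) + 1))
                             + - q i * (ln ((1 - y i) + s * - q i) + 1))
            + -2 * (- Q * (ln (r0 + s * - Q) + 1)).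
Let G'' s := rsum m (fun i => -1 * (q i * q i / (y i + s * q i))
                              + - q i * - q i / ((1 - y i) + s * - q i))
             + -2 * (- Q * - Q / (r0 + s * - Q)).

Lemma rsum_segment s : rsum m (fun i => y i + s * q i) = rsum m y + s * Q.
Proof. rewrite rsum_plus, rsum_scal. reflexivity. Qed.

Lemma segment_eq s : vertex_entropy m (fun i => s * x i + (1 - s) * y i) = G s.
Proof.
  rewrite (vertex_entropy_ext m _ (fun i => y i + s * q i)) by (intros; unfold q; ring).
  unfold vertex_entropy, G. rewrite rsum_segment. unfold r0.
  replace (1 - (rsum m y + s * Q)) with (1 - rsum m y + s * - Q) by ring.
  rewrite (rsum_ext m _ (fun i => -1 * xlnx (y i + s * q i) + xlnx (1 - y i + s * - q i)));
    [ring|].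
  intros i Hi. replace (1 - (y i + s * q i)) with (1 - y i + s * - q i) by ring. ring.
Qed.

Lemma segment_edge_bounds i : (i < m)%nat -> 0 <= y i <= 1 /\ 0 <= y i + q i <= 1.
Proof.
  intros Hi. pose proof (simplex_coord m x i Hx Hi). pose proof (simplex_coord m y i Hy Hi).
  unfold q. lra.
Qed.

Lemma segment_slack_bounds : 0 <= r0 <= 1 /\ 0 <= r0 + - Q <= 1.
Proof.
  destruct Hx as [Hx0 Hx1]. destruct Hy as [Hy0 Hy1].
  pose proof (rsum_nonneg m x Hx0). pose proof (rsum_nonneg m y Hy0).
  unfold r0, Q, q. rewrite rsum_minus. lra.
Qed.

Lemma segment_smooth : smooth01 G G' G''.
Proof.
  apply smooth01_plus.
  - apply (smooth01_rsum m
      (fun i s => -1 * xlnx (y i + s * q i) + xlnx ((1 - y i) + s * - q i))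
      (fun i s => -1 * (q i * (ln (y i + s * q i) + 1))
                  + - q i * (ln ((1 - y i) + s * - q i) + 1))
      (fun i s => -1 * (q i * q i / (y i + s * q i))
                  + - q i * - q i / ((1 - y i) + s * - q i))).
    intros i Hi. destruct (segment_edge_bounds i Hi).
    apply smooth01_plus; [apply smooth01_scal|]; apply smooth01_xlnx_affine; lra.
  - destruct segment_slack_bounds.
    apply smooth01_scal, smooth01_xlnx_affine; lra.
Qed.

(* The second derivative is nonpositive: this is the Hessian inequality for
   the edge coordinates together with the slack [1 - Σ z_i]. *)
Lemma segment_curvature s : 0 < s < 1 -> G'' s <= 0.
Proof.
  intros Hs.
  set (P := fun i => y i + s * q i).
  set (p0 := r0 + s * - Q).
  assert (HP : forall i, (i < m)%nat -> 0 <= P i)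
    by (intros i Hi; destruct (segment_edge_bounds i Hi); apply affine_nonneg; lra).
  assert (HactP : forall i, (i < m)%nat -> q i <> 0 -> 0 < P i < 1)
    by (intros i Hi Hq; destruct (segment_edge_bounds i Hi); now apply affine_interior).
  assert (Hp0 : 0 <= p0) by (destruct segment_slack_bounds; apply affine_nonneg; lra).
  assert (Hact0 : - Q <> 0 -> 0 < p0 < 1)
    by (intros HQ; destruct segment_slack_bounds; now apply affine_interior).
  assert (HsumP : rsum m P + p0 = 1) by (unfold P, p0, r0; rewrite rsum_segment; ring).
  pose proof (hessian_ineq_slack m P q p0 (- Q) HP Hp0 HsumP HactP Hact0
                ltac:(unfold Q; ring)) as HH.
  assert (HG'' : G'' s = rsum m (fun i => q i * q i / (1 - P i) - q i * q i / P i)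
                         + (- Q * - Q / (1 - p0) - - Q * - Q / p0)
                         - - Q * - Q / (1 - p0) - - Q * - Q / p0).
  { unfold G''. fold p0.
    rewrite (rsum_ext m _ (fun i => q i * q i / (1 - P i) - q i * q i / P i)); [ring|].
    intros i Hi. unfold P.
    replace (1 - (y i + s * q i)) with (1 - y i + s * - q i) by ring.
    unfold Rdiv. ring. }
  assert (0 <= rsum m P) by (apply rsum_nonneg; auto).
  assert (0 <= - Q * - Q / (1 - p0)) by (apply sq_div_nonneg; lra).
  assert (0 <= - Q * - Q / p0) by (apply sq_div_nonneg; lra).
  lra.
Qed.

Lemma vertex_entropy_concave t : 0 <= t <= 1 ->
  t * vertex_entropy m x + (1 - t) * vertex_entropy m y
    <= vertex_entropy m (fun i => t * x i + (1 - t) * y i).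
Proof.
  intros Ht.
  rewrite (vertex_entropy_ext m x (fun i => 1 * x i + (1 - 1) * y i)) by (intros; ring).
  rewrite (vertex_entropy_ext m y (fun i => 0 * x i + (1 - 0) * y i)) by (intros; ring).
  rewrite !segment_eq.
  apply (concave_of_smooth01 G G' G''); [exact segment_smooth|exact segment_curvature|exact Ht].
Qed.

End Segment.

Lemma vertex_entropy_last_zero m z : z m = 0 ->
  vertex_entropy (S m) z = vertex_entropy m z.
Proof.
  intros Hz. unfold vertex_entropy. simpl. rewrite Hz, Rminus_0_r, Rplus_0_r, xlnx_0, xlnx_1.
  ring.
Qed.

Lemma vertex_entropy_vertex m z : (forall i, (i < m)%nat -> z i = 0) -> z m = 1 ->
  vertex_entropy (S m) z = 0.
Proof.
  intros Hz Hm. unfold vertex_entropy. simpl.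
  rewrite (rsum_ext m z (fun _ => 0) Hz), rsum_zero.
  rewrite (rsum_ext m _ (fun _ => 0)), rsum_zero.
  - rewrite Hm. replace (1 - (0 + 1)) with 0 by ring. rewrite Rminus_diag, xlnx_0, xlnx_1.
    ring.
  - intros i Hi. rewrite Hz, Rminus_0_r, xlnx_0, xlnx_1 by exact Hi. ring.
Qed.

Definition unit_vec (m : nat) (i : nat) : R := if Nat.eqb i m then 1 else 0.

Lemma unit_vec_simplex m : simplex (S m) (unit_vec m).
Proof.
  split.
  - intros i Hi. unfold unit_vec. destruct (Nat.eqb i m); lra.
  - simpl. unfold unit_vec at 2. rewrite Nat.eqb_refl.
    rewrite (rsum_ext m (unit_vec m) (fun _ => 0)), rsum_zero; [lra|].
    intros i Hi. unfold unit_vec. destruct (Nat.eqb_spec i m); [lia|reflexivity].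
Qed.

Lemma simplex_peel m z : simplex (S m) z -> z m <> 1 ->
  exists z', simplex m z' /\ z' m = 0 /\
    forall i, (i < S m)%nat -> z i = z m * unit_vec m i + (1 - z m) * z' i.
Proof.
  intros [Hz Hs] Hl1. simpl in Hs. set (lam := z m) in *.
  assert (Hlam : 0 <= lam) by (apply Hz; lia).
  assert (0 <= rsum m z) by (apply rsum_nonneg; intros; apply Hz; lia).
  exists (fun i => if Nat.eqb i m then 0 else z i / (1 - lam)).
  split; [split|split].
  - intros i Hi. destruct (Nat.eqb i m); [lra|].
    apply Rmult_le_pos; [apply Hz; lia|apply Rlt_le, Rinv_0_lt_compat; lra].
  - rewrite (rsum_ext m _ (fun i => / (1 - lam) * z i)), rsum_scal.
    + apply (Rmult_le_reg_l (1 - lam)); [lra|].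
      rewrite <- Rmult_assoc, Rinv_r by lra. lra.
    + intros i Hi. destruct (Nat.eqb_spec i m); [lia|]. unfold Rdiv. ring.
  - now rewrite Nat.eqb_refl.
  - intros i Hi. unfold unit_vec. destruct (Nat.eqb_spec i m) as [->|]; [fold lam; ring|].
    field. lra.
Qed.

(* Ψ is nonnegative on the simplex, by induction on the dimension: peel off
   the last coordinate and use concavity together with [Ψ(e_m) = 0]. *)
Lemma vertex_entropy_nonneg m z : simplex m z -> 0 <= vertex_entropy m z.
Proof.
  revert z. induction m as [|m IH]; intros z Hz.
  { unfold vertex_entropy. simpl. rewrite Rminus_0_r, xlnx_1. lra. }
  assert (Hunit0 : forall i, (i < m)%nat -> unit_vec m i = 0)
    by (intros i Hi; unfold unit_vec; destruct (Nat.eqb_spec i m); [lia|reflexivity]).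
  assert (Hunit1 : unit_vec m m = 1) by (unfold unit_vec; now rewrite Nat.eqb_refl).
  destruct (Req_dec (z m) 1) as [Hl1|Hl1].
  -
    rewrite vertex_entropy_vertex; [lra| |exact Hl1].
    intros i Hi. destruct Hz as [Hz0 Hs]. simpl in Hs.
    pose proof (rsum_ge_term m z i (fun j Hj => Hz0 j ltac:(lia)) Hi).
    pose proof (Hz0 i ltac:(lia)). lra.
  - destruct (simplex_peel m z Hz Hl1) as (z' & Hz' & Hz'm & Hdecomp).
    assert (Hz'S : simplex (S m) z').
    { destruct Hz' as [Hz'0 Hz'1]. split; simpl; [|lra].
      intros i Hi. destruct (Nat.eq_dec i m) as [->|]; [lra|apply Hz'0; lia]. }
    pose proof (simplex_coord (S m) z m Hz ltac:(lia)) as Hzm.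
    pose proof (vertex_entropy_concave (S m) (unit_vec m) z'
                  (unit_vec_simplex m) Hz'S (z m) Hzm) as Hconc.
    rewrite vertex_entropy_vertex in Hconc by assumption.
    rewrite vertex_entropy_last_zero in Hconc by exact Hz'm.
    rewrite (vertex_entropy_ext (S m) z _ Hdecomp).
    pose proof (IH z' Hz'). nra.
Qed.

Definition restrict (E : list (nat * nat)) (v : nat) (x : nat -> R) (i : nat) : R :=
  if incident E v i then x i else 0.

Lemma SB_vertex_sum n E x :
  SB n E x = / 2 * rsum n (fun v => vertex_entropy (length E) (restrict E v x)).
Proof.
  unfold SB, vertex_entropy, sum_at, restrict. f_equal. apply rsum_ext. intros v _.
  f_equal. apply rsum_ext. intros i _.
  destruct (incident E v i); [reflexivity|].
  rewrite Rminus_0_r, xlnx_0, xlnx_1. ring.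
Qed.

Lemma restrict_simplex n E x v : FM n E x -> (v < n)%nat ->
  simplex (length E) (restrict E v x).
Proof.
  intros [Hx Hsum] Hv. split; [|exact (Hsum v Hv)].
  intros i Hi. unfold restrict. destruct (incident E v i); [auto|lra].
Qed.

(* Nonnegativity and concavity of [S^B] follow vertexwise. *)
Theorem proposition4 (n : nat) (E : list (nat * nat)) (HG : simple_graph n E) :
  (forall x, FM n E x -> 0 <= SB n E x) /\
  (forall x y (t : R), FM n E x -> FM n E y -> 0 <= t <= 1 ->
     t * SB n E x + (1 - t) * SB n E y
       <= SB n E (fun i => t * x i + (1 - t) * y i)).
Proof.
  split.
  - intros x Hx. rewrite SB_vertex_sum. apply Rmult_le_pos; [lra|].
    apply rsum_nonneg. intros v Hv. apply vertex_entropy_nonneg, (restrict_simplex n); auto.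
  - intros x y t Hx Hy Ht. rewrite !SB_vertex_sum.
    enough (t * rsum n (fun v => vertex_entropy (length E) (restrict E v x))
            + (1 - t) * rsum n (fun v => vertex_entropy (length E) (restrict E v y))
            <= rsum n (fun v => vertex_entropy (length E)
                                  (restrict E v (fun i => t * x i + (1 - t) * y i))))
      by lra.
    rewrite <- !rsum_scal, <- rsum_plus. apply rsum_le. intros v Hv.
    rewrite (vertex_entropy_ext _ (restrict E v (fun i => t * x i + (1 - t) * y i))
               (fun i => t * restrict E v x i + (1 - t) * restrict E v y i))
      by (intros i _; unfold restrict; destruct (incident E v i); ring).
    apply vertex_entropy_concave; [apply (restrict_simplex n)..|]; assumption.
Qed.
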